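(* For the reduced system $\dot x=G(x)$ (context), with the stated parameter inequalities, let $J(x)=\partial G/\partial x$ be the Jacobian at $x=(\mu_{34},s,\mu_{200},z)\in(0,\infty)^4$, with indices ordered as $(\mu_{34},s,\mu_{200},z)$. Then, for every $x\in(0,\infty)^4$: $J_{13}=J_{23}=J_{24}=J_{31}=J_{41}=0$; $J_{12}<0$, $J_{14}<0$, $J_{32}<0$, $J_{34}<0$; $J_{21}=\partial\dot s/\partial\mu_{34}<0$, $J_{43}=\partial \dot z/\partial\mu_{200}<0$; $J_{42}=\partial\dot z/\partial s>0$. In particular, with $\sigma=(-1,1,-1,1)$ and $\Sigma=\mathrm{diag}(\sigma)$, the matrix $\Sigma J(x)\Sigma$ is Metzler (all off-diagonal entries nonnegative) for every $x\in(0,\infty)^4$, and $J(x)$ is irreducible for every $x\in(0,\infty)^4$.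
   Context: All of the following are positive real parameters: $A_s, A_z, E_{34}, E_{200}, E_S, E_Z, \beta_{34}, \beta_{-34}, \beta_{200}, \beta_{-200}, \gamma_s, \gamma_z, c_s, c_{-s}, c_z, c_{-z}, \beta_s, \beta_{s1}, \beta_{s2}, \beta_z, \beta_{z1}, \beta_{z2}, k_s, k_{s1}, k_{s2}, k_{-s}, k_z, k_{z1}, k_{z2}, k_{-z}, \delta_z$. They satisfy $\beta_s<\beta_{s1}<\beta_{s2}$, $\beta_z<\beta_{z1}<\beta_{z2}$, $k_s>k_{s1}>k_{s2}$ and $k_z>k_{z1}>k_{z2}$. For $\rho\in\{s,z\}$ define $e_{\rho1}=\beta_{\rho1}\beta_{\rho2}+(\beta_{\rho1}+\beta_{\rho2})c_{-\rho}+c_{-\rho}^2$, $e_{\rho2}=c_\rho(\beta_{\rho2}+c_{-\rho})$, $e_{\rho3}=\beta_\rho\beta_{\rho2}+\beta_{\rho1}\beta_{\rho2}+\beta_{\rho1}c_{-\rho}$, $\Delta_\rho(\mu)=\beta_{\rho2}c_\rho^2\mu^2+e_{\rho3}c_\rho\mu+e_{\rho1}\beta_\rho$, and $N_\rho(\mu)=\dfrac{k_\rho(\beta_{\rho2}c_\rho\mu+e_{\rho1})+k_{\rho1}e_{\rho2}\mu+k_{\rho2}c_\rho^2\mu^2}{\Delta_\rho(\mu)}$ for $\mu\ge 0$. The reduced system $\dot x=G(x)$, $x=(\mu_{34},s,\mu_{200},z)$, is $\dot\mu_{34}=\dfrac{\beta_{34}E_{34}A_sA_z}{(s^2+A_s)(z^2+A_z)}-\beta_{-34}\mu_{34}$,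 $\dot s=\dfrac{\gamma_sE_SA_s}{s^2+A_s}N_s(\mu_{34})-k_{-s}s$, $\dot\mu_{200}=\dfrac{\beta_{200}E_{200}A_sA_z}{(s^2+A_s)(z^2+A_z)}-\beta_{-200}\mu_{200}$, $\dot z=\delta_z+\dfrac{\gamma_zE_Zs^2z^2}{(s^2+A_s)(z^2+A_z)}N_z(\mu_{200})-k_{-z}z$. *)

From Stdlib Require Import Reals Lra Arith.
Open Scope R_scope.

Record params := mkParams {
  A_s : R; A_z : R; E_34 : R; E_200 : R; E_S : R; E_Z : R;
  beta_34 : R; beta_m34 : R; beta_200 : R; beta_m200 : R;
  gamma_s : R; gamma_z : R; c_s : R; c_ms : R; c_z : R; c_mz : R;
  beta_s : R; beta_s1 : R; beta_s2 : R; beta_z : R; beta_z1 : R; beta_z2 : R;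
  k_s : R; k_s1 : R; k_s2 : R; k_ms : R; k_z : R; k_z1 : R; k_z2 : R; k_mz : R;
  delta_z : R }.

Definition valid_params (p : params) : Prop :=
  0 < A_s p /\ 0 < A_z p /\ 0 < E_34 p /\ 0 < E_200 p /\ 0 < E_S p /\ 0 < E_Z p /\
  0 < beta_34 p /\ 0 < beta_m34 p /\ 0 < beta_200 p /\ 0 < beta_m200 p /\
  0 < gamma_s p /\ 0 < gamma_z p /\ 0 < c_s p /\ 0 < c_ms p /\ 0 < c_z p /\ 0 < c_mz p /\
  0 < beta_s p /\ 0 < beta_s1 p /\ 0 < beta_s2 p /\
  0 < beta_z p /\ 0 < beta_z1 p /\ 0 < beta_z2 p /\
  0 < k_s p /\ 0 < k_s1 p /\ 0 < k_s2 p /\ 0 < k_ms p /\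
  0 < k_z p /\ 0 < k_z1 p /\ 0 < k_z2 p /\ 0 < k_mz p /\ 0 < delta_z p /\
  beta_s p < beta_s1 p /\ beta_s1 p < beta_s2 p /\
  beta_z p < beta_z1 p /\ beta_z1 p < beta_z2 p /\
  k_s1 p < k_s p /\ k_s2 p < k_s1 p /\
  k_z1 p < k_z p /\ k_z2 p < k_z1 p.

Definition e1 (c cm b b1 b2 : R) : R := b1 * b2 + (b1 + b2) * cm + cm ^ 2.
Definition e2 (c cm b b1 b2 : R) : R := c * (b2 + cm).
Definition e3 (c cm b b1 b2 : R) : R := b * b2 + b1 * b2 + b1 * cm.
Definition Delta (c cm b b1 b2 mu : R) : R :=
  b2 * c ^ 2 * mu ^ 2 + e3 c cm b b1 b2 * c * mu + e1 c cm b b1 b2 * b.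
Definition Nfun (k k1 k2 c cm b b1 b2 mu : R) : R :=
  (k * (b2 * c * mu + e1 c cm b b1 b2) + k1 * e2 c cm b b1 b2 * mu
     + k2 * c ^ 2 * mu ^ 2) / Delta c cm b b1 b2 mu.

Definition N_s (p : params) (mu : R) : R :=
  Nfun (k_s p) (k_s1 p) (k_s2 p) (c_s p) (c_ms p) (beta_s p) (beta_s1 p) (beta_s2 p) mu.
Definition N_z (p : params) (mu : R) : R :=
  Nfun (k_z p) (k_z1 p) (k_z2 p) (c_z p) (c_mz p) (beta_z p) (beta_z1 p) (beta_z2 p) mu.

(* State vectors: x : nat -> R with x 1 = mu34, x 2 = s, x 3 = mu200, x 4 = z
   (1-based indices, as in the paper; other indices are unused). *)
Definition G (p : params) (i : nat) (x : nat -> R) : R :=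
  let mu34 := x 1%nat in let s := x 2%nat in let mu200 := x 3%nat in let z := x 4%nat in
  match i with
  | 1%nat => beta_34 p * E_34 p * A_s p * A_z p / ((s ^ 2 + A_s p) * (z ^ 2 + A_z p))
             - beta_m34 p * mu34
  | 2%nat => gamma_s p * E_S p * A_s p / (s ^ 2 + A_s p) * N_s p mu34 - k_ms p * s
  | 3%nat => beta_200 p * E_200 p * A_s p * A_z p / ((s ^ 2 + A_s p) * (z ^ 2 + A_z p))
             - beta_m200 p * mu200
  | 4%nat => delta_z p
             + gamma_z p * E_Z p * s ^ 2 * z ^ 2 / ((s ^ 2 + A_s p) * (z ^ 2 + A_z p))
               * N_z p mu200
             - k_mz p * z
  | _ => 0
  end.

Definition upd (x : nat -> R) (j : nat) (t : R) : nat -> R :=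
  fun k => if Nat.eqb k j then t else x k.

Definition is_jacobian (p : params) (x : nat -> R) (J : nat -> nat -> R) : Prop :=
  forall i j : nat, (1 <= i <= 4)%nat -> (1 <= j <= 4)%nat ->
    derivable_pt_lim (fun t => G p i (upd x j t)) (x j) (J i j).

Definition sigma (i : nat) : R :=
  match i with 1%nat => -1 | 2%nat => 1 | 3%nat => -1 | 4%nat => 1 | _ => 0 end.

Definition metzler4 (A : nat -> nat -> R) : Prop :=
  forall i j : nat, (1 <= i <= 4)%nat -> (1 <= j <= 4)%nat -> i <> j -> 0 <= A i j.

Definition conj_sigma (J : nat -> nat -> R) : nat -> nat -> R :=
  fun i j => sigma i * J i j * sigma j.

(* A 4x4 matrix is reducible iff there is a nonempty proper subset I of {1..4}
   with A_ij = 0 for all i in I, j not in I (i.e. it can be permuted to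
   block-triangular form); irreducible = not reducible. *)
Definition reducible4 (A : nat -> nat -> R) : Prop :=
  exists I : nat -> bool,
    (exists i, (1 <= i <= 4)%nat /\ I i = true) /\
    (exists j, (1 <= j <= 4)%nat /\ I j = false) /\
    (forall i j, (1 <= i <= 4)%nat -> (1 <= j <= 4)%nat ->
       I i = true -> I j = false -> A i j = 0).
Definition irreducible4 (A : nat -> nat -> R) : Prop := ~ reducible4 A.

(* Every off-diagonal entry of the Jacobian is the derivative of one of three scalar
   functions, scaled by a positive factor: the repressor u |-> 1/(u^2 + A) (decreasing),
   the activator u |-> u^2/(u^2 + A) (increasing), or the rational function N_rho, which is
   decreasing because the numerator of its quotient-rule derivative is c times a quadratic
   in c mu whose three coefficients are negative under the orderings of the beta's and k's.
   This fixes the sign pattern, hence the Metzler property after conjugation by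
   diag(-1, 1, -1, 1); the nonzero entries 1->2->1 and 1->4->3->2 make the incidence graph
   strongly connected, hence J irreducible. *)
From Pilot Require Import Defs.
From Stdlib Require Import Reals Lra Psatz.
From Coquelicot Require Import Coquelicot.
Open Scope R_scope.

(* Coquelicot exports its own [Delta] and [sigma]; the model's are written [Defs.Delta]
   and [Defs.sigma] below. *)

Ltac positivity :=
  repeat first [ assumption | apply Rplus_lt_0_compat | apply Rmult_lt_0_compat
               | apply pow_lt | apply Rinv_0_lt_compat | apply Rdiv_lt_0_compat | lra ].

Lemma Derive_affine_comp (f g : R -> R) (a b y d : R) :
  is_derive f y d -> (forall u, g u = b + a * f u) -> Derive g y = a * d.
Proof.
  intros Hf Hg.
  rewrite (Derive_ext g (fun u => b + a * f u) y Hg).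
  apply is_derive_unique.
  replace (a * d) with (0 + a * d) by ring.
  exact (is_derive_plus (fun _ => b) (fun u => a * f u) y 0 (a * d)
           (is_derive_const b y) (is_derive_scal f y a d Hf)).
Qed.

Lemma is_derive_hill_repressor (A t : R) :
  0 < A -> is_derive (fun u => / (u ^ 2 + A)) t (- (2 * t) / (t ^ 2 + A) ^ 2).
Proof.
  intros HA. auto_derive; [| field]; apply Rgt_not_eq; nra.
Qed.

Lemma is_derive_hill_activator (A t : R) :
  0 < A -> is_derive (fun u => u ^ 2 / (u ^ 2 + A)) t (2 * A * t / (t ^ 2 + A) ^ 2).
Proof.
  intros HA. auto_derive; [| field]; apply Rgt_not_eq; nra.
Qed.

Section RationalN.

Variables k k1 k2 c cm b b1 b2 : R.

Definition Nnum (mu : R) : R :=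
  k * (b2 * c * mu + e1 c cm b b1 b2) + k1 * e2 c cm b b1 b2 * mu + k2 * c ^ 2 * mu ^ 2.

Definition dNfun (mu : R) : R :=
  ((k * b2 * c + k1 * e2 c cm b b1 b2 + 2 * k2 * c ^ 2 * mu) * Defs.Delta c cm b b1 b2 mu
   - Nnum mu * (2 * b2 * c ^ 2 * mu + e3 c cm b b1 b2 * c))
  / Defs.Delta c cm b b1 b2 mu ^ 2.

Lemma is_derive_Nfun (mu : R) :
  Defs.Delta c cm b b1 b2 mu <> 0 -> is_derive (Nfun k k1 k2 c cm b b1 b2) mu (dNfun mu).
Proof.
  intros HD. unfold Nfun, dNfun, Nnum. unfold Defs.Delta in *.
  auto_derive; [exact HD | unfold e1, e2, e3 in *; field; exact HD].
Qed.

Lemma dNfun_numerator_eq (mu : R) :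
  (k * b2 * c + k1 * e2 c cm b b1 b2 + 2 * k2 * c ^ 2 * mu) * Defs.Delta c cm b b1 b2 mu
    - Nnum mu * (2 * b2 * c ^ 2 * mu + e3 c cm b b1 b2 * c)
  = c * ((k2 * e3 c cm b b1 b2 - b2 * (k * b2 + k1 * (b2 + cm))) * (c * mu) ^ 2
         + 2 * e1 c cm b b1 b2 * (k2 * b - k * b2) * (c * mu)
         + e1 c cm b b1 b2 * (b2 + cm) * (k1 * b - k * b1)).
Proof. unfold Nnum, Defs.Delta, e1, e2, e3. ring. Qed.

Hypotheses (Hk : 0 < k) (Hk1 : 0 < k1) (Hk2 : 0 < k2) (Hc : 0 < c) (Hcm : 0 < cm)
  (Hb : 0 < b) (Hb1 : 0 < b1) (Hb2 : 0 < b2).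

Lemma e1_pos : 0 < e1 c cm b b1 b2.
Proof. unfold e1. positivity. Qed.

Lemma Delta_pos (mu : R) : 0 < mu -> 0 < Defs.Delta c cm b b1 b2 mu.
Proof. intros. pose proof e1_pos. unfold Defs.Delta, e3. positivity. Qed.

Lemma Nfun_pos (mu : R) : 0 < mu -> 0 < Nfun k k1 k2 c cm b b1 b2 mu.
Proof.
  intros Hmu. pose proof e1_pos. unfold Nfun, e2.
  apply Rdiv_lt_0_compat; [positivity | exact (Delta_pos mu Hmu)].
Qed.

Hypotheses (Hbb1 : b < b1) (Hb1b2 : b1 < b2) (Hk1k : k1 < k) (Hk2k1 : k2 < k1).

Lemma dNfun_neg (mu : R) : 0 < mu -> dNfun mu < 0.
Proof.
  intros Hmu. unfold dNfun. rewrite dNfun_numerator_eq.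
  pose proof (Delta_pos mu Hmu) as HD. pose proof (e1_pos) as HE1.
  set (u := c * mu). assert (Hu : 0 < u) by (unfold u; positivity).
  assert (Hquad : k2 * e3 c cm b b1 b2 - b2 * (k * b2 + k1 * (b2 + cm)) < 0).
  { assert (He3 : 0 < e3 c cm b b1 b2) by (unfold e3; positivity).
    assert (k2 * e3 c cm b b1 b2 < k1 * e3 c cm b b1 b2) by (apply Rmult_lt_compat_r; lra).
    assert (k1 * b * b2 < k * b2 * b2) by (apply Rmult_lt_compat_r; nra).
    assert (k1 * b1 * b2 < k1 * b2 * b2) by (apply Rmult_lt_compat_r; nra).
    assert (k1 * b1 * cm < k1 * b2 * cm) by (apply Rmult_lt_compat_r; nra).
    unfold e3 in *. nra. }
  assert (Hlin : k2 * b - k * b2 < 0) by nra.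
  assert (Hconst : k1 * b - k * b1 < 0) by nra.
  apply Rdiv_neg_pos; [apply Rmult_pos_neg; [exact Hc |] | positivity].
  assert (0 < u ^ 2) by positivity.
  assert (0 < e1 c cm b b1 b2 * (b2 + cm)) by positivity.
  assert (0 < e1 c cm b b1 b2 * u) by positivity.
  nra.
Qed.

End RationalN.

Lemma metzler4_conj_sigma (A : nat -> nat -> R) :
  A 1%nat 2%nat <= 0 -> A 2%nat 1%nat <= 0 -> A 1%nat 4%nat <= 0 -> A 4%nat 1%nat <= 0 ->
  A 2%nat 3%nat <= 0 -> A 3%nat 2%nat <= 0 -> A 3%nat 4%nat <= 0 -> A 4%nat 3%nat <= 0 ->
  0 <= A 1%nat 3%nat -> 0 <= A 3%nat 1%nat -> 0 <= A 2%nat 4%nat -> 0 <= A 4%nat 2%nat ->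
  metzler4 (conj_sigma A).
Proof.
  intros ? ? ? ? ? ? ? ? ? ? ? ? i j Hi Hj Hij; unfold conj_sigma.
  destruct i as [|[|[|[|[|i]]]]]; try lia; destruct j as [|[|[|[|[|j]]]]]; try lia;
    cbn [Defs.sigma]; lra.
Qed.

Lemma irreducible4_of_cycles (A : nat -> nat -> R) :
  A 1%nat 2%nat <> 0 -> A 2%nat 1%nat <> 0 -> A 1%nat 4%nat <> 0 ->
  A 4%nat 3%nat <> 0 -> A 3%nat 2%nat <> 0 -> irreducible4 A.
Proof.
  intros H12 H21 H14 H43 H32 [I [[i [Hi Ii]] [[j [Hj Ij]] HI]]].
  assert (closed : forall a b, (1 <= a <= 4)%nat -> (1 <= b <= 4)%nat ->
    A a b <> 0 -> I a = true -> I b = true).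
  { intros a b Ha Hb Hab Ia. destruct (I b) eqn:Ib; [reflexivity|].
    exfalso; exact (Hab (HI a b Ha Hb Ia Ib)). }
  pose proof (closed 1%nat 2%nat ltac:(lia) ltac:(lia) H12) as C12.
  pose proof (closed 2%nat 1%nat ltac:(lia) ltac:(lia) H21) as C21.
  pose proof (closed 1%nat 4%nat ltac:(lia) ltac:(lia) H14) as C14.
  pose proof (closed 4%nat 3%nat ltac:(lia) ltac:(lia) H43) as C43.
  pose proof (closed 3%nat 2%nat ltac:(lia) ltac:(lia) H32) as C32.
  assert (I1 : I 1%nat = true).
  { destruct i as [|[|[|[|[|i]]]]]; try lia; auto. }
  assert (Iall : forall k, (1 <= k <= 4)%nat -> I k = true).
  { intros k Hk. destruct k as [|[|[|[|[|k]]]]]; try lia; auto. }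
  rewrite (Iall j Hj) in Ij. discriminate.
Qed.

Definition jac (p : params) (x : nat -> R) (i j : nat) : R :=
  Derive (fun t => G p i (upd x j t)) (x j).

Ltac destruct_valid_params Hp :=
  destruct Hp as (HAs & HAz & HE34 & HE200 & HES & HEZ & Hb34 & Hbm34 & Hb200 & Hbm200 &
    Hgs & Hgz & Hcs & Hcms & Hcz & Hcmz & Hbs & Hbs1 & Hbs2 & Hbz & Hbz1 & Hbz2 &
    Hks & Hks1 & Hks2 & Hkms & Hkz & Hkz1 & Hkz2 & Hkmz & Hdz &
    Hbss1 & Hbs1s2 & Hbzz1 & Hbz1z2 & Hks1s & Hks2s1 & Hkz1z & Hkz2z1).

Section Jacobian.

Variables (p : params) (x : nat -> R).
Hypotheses (Hp : valid_params p) (Hx : forall k : nat, (1 <= k <= 4)%nat -> 0 < x k).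

Lemma ex_derive_G_partial (i j : nat) : (1 <= i <= 4)%nat -> (1 <= j <= 4)%nat ->
  ex_derive (fun t => G p i (upd x j t)) (x j).
Proof.
  intros Hi Hj. pose proof Hp as Hp'. destruct_valid_params Hp'.
  pose proof (Hx 1%nat ltac:(lia)) as Hmu34. pose proof (Hx 2%nat ltac:(lia)) as Hs.
  pose proof (Hx 3%nat ltac:(lia)) as Hmu200. pose proof (Hx 4%nat ltac:(lia)) as Hz.
  pose proof (Delta_pos _ _ _ _ _ Hcs Hcms Hbs Hbs1 Hbs2 _ Hmu34) as HDs.
  pose proof (Delta_pos _ _ _ _ _ Hcz Hcmz Hbz Hbz1 Hbz2 _ Hmu200) as HDz.
  destruct i as [|[|[|[|[|i]]]]]; try lia; destruct j as [|[|[|[|[|j]]]]]; try lia;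
    unfold G, upd, N_s, N_z; cbn [Nat.eqb];
    auto_derive; repeat split; try (apply Rgt_not_eq; positivity);
    eexists; apply is_derive_Nfun; lra.
Qed.

Lemma is_jacobian_jac : is_jacobian p x (jac p x).
Proof.
  intros i j Hi Hj. apply is_derive_Reals, Derive_correct, ex_derive_G_partial; assumption.
Qed.

Lemma jac_zero_entries :
  jac p x 1%nat 3%nat = 0 /\ jac p x 2%nat 3%nat = 0 /\ jac p x 2%nat 4%nat = 0 /\
  jac p x 3%nat 1%nat = 0 /\ jac p x 4%nat 1%nat = 0.
Proof. unfold jac, G, upd; cbn [Nat.eqb]; repeat split; apply Derive_const. Qed.

Lemma jac_repression_entries_neg :
  jac p x 1%nat 2%nat < 0 /\ jac p x 1%nat 4%nat < 0 /\
  jac p x 3%nat 2%nat < 0 /\ jac p x 3%nat 4%nat < 0.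
Proof.
  pose proof Hp as Hp'. destruct_valid_params Hp'.
  pose proof (Hx 2%nat ltac:(lia)) as Hs. pose proof (Hx 4%nat ltac:(lia)) as Hz.
  set (s := x 2%nat) in *. set (z := x 4%nat) in *.
  pose proof (is_derive_hill_repressor _ s HAs) as Hrep_s.
  pose proof (is_derive_hill_repressor _ z HAz) as Hrep_z.
  assert (Hslope_s : - (2 * s) / (s ^ 2 + A_s p) ^ 2 < 0).
  { apply Rdiv_neg_pos; positivity. }
  assert (Hslope_z : - (2 * z) / (z ^ 2 + A_z p) ^ 2 < 0).
  { apply Rdiv_neg_pos; positivity. }
  unfold jac, G, upd; cbn [Nat.eqb]; fold s z.
  repeat split.
  - erewrite (Derive_affine_comp _ _ (beta_34 p * E_34 p * A_s p * A_z p / (z ^ 2 + A_z p))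
      (- (beta_m34 p * x 1%nat)) _ _ Hrep_s); [apply Rmult_pos_neg; positivity |].
    intros u; field; split; apply Rgt_not_eq; nra.
  - erewrite (Derive_affine_comp _ _ (beta_34 p * E_34 p * A_s p * A_z p / (s ^ 2 + A_s p))
      (- (beta_m34 p * x 1%nat)) _ _ Hrep_z); [apply Rmult_pos_neg; positivity |].
    intros u; field; split; apply Rgt_not_eq; nra.
  - erewrite (Derive_affine_comp _ _ (beta_200 p * E_200 p * A_s p * A_z p / (z ^ 2 + A_z p))
      (- (beta_m200 p * x 3%nat)) _ _ Hrep_s); [apply Rmult_pos_neg; positivity |].
    intros u; field; split; apply Rgt_not_eq; nra.
  - erewrite (Derive_affine_comp _ _ (beta_200 p * E_200 p * A_s p * A_z p / (s ^ 2 + A_s p))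
      (- (beta_m200 p * x 3%nat)) _ _ Hrep_z); [apply Rmult_pos_neg; positivity |].
    intros u; field; split; apply Rgt_not_eq; nra.
Qed.

Lemma jac_N_entries_neg : jac p x 2%nat 1%nat < 0 /\ jac p x 4%nat 3%nat < 0.
Proof.
  pose proof Hp as Hp'. destruct_valid_params Hp'.
  pose proof (Hx 1%nat ltac:(lia)) as Hmu34. pose proof (Hx 2%nat ltac:(lia)) as Hs.
  pose proof (Hx 3%nat ltac:(lia)) as Hmu200. pose proof (Hx 4%nat ltac:(lia)) as Hz.
  pose proof (Delta_pos _ _ _ _ _ Hcs Hcms Hbs Hbs1 Hbs2 _ Hmu34) as HDs.
  pose proof (Delta_pos _ _ _ _ _ Hcz Hcmz Hbz Hbz1 Hbz2 _ Hmu200) as HDz.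
  pose proof (is_derive_Nfun (k_s p) (k_s1 p) (k_s2 p) _ _ _ _ _ _ (Rgt_not_eq _ _ HDs)) as HNs.
  pose proof (is_derive_Nfun (k_z p) (k_z1 p) (k_z2 p) _ _ _ _ _ _ (Rgt_not_eq _ _ HDz)) as HNz.
  assert (HdNs : dNfun (k_s p) (k_s1 p) (k_s2 p) (c_s p) (c_ms p) (beta_s p) (beta_s1 p)
                   (beta_s2 p) (x 1%nat) < 0) by (apply dNfun_neg; assumption).
  assert (HdNz : dNfun (k_z p) (k_z1 p) (k_z2 p) (c_z p) (c_mz p) (beta_z p) (beta_z1 p)
                   (beta_z2 p) (x 3%nat) < 0) by (apply dNfun_neg; assumption).
  unfold jac, G, upd; cbn [Nat.eqb]; split.
  - erewrite (Derive_affine_comp _ _ (gamma_s p * E_S p * A_s p / (x 2%nat ^ 2 + A_s p))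
      (- (k_ms p * x 2%nat)) _ _ HNs); [apply Rmult_pos_neg; positivity |].
    intros u; unfold N_s; ring.
  - erewrite (Derive_affine_comp _ _
      (gamma_z p * E_Z p * x 2%nat ^ 2 * x 4%nat ^ 2
         / ((x 2%nat ^ 2 + A_s p) * (x 4%nat ^ 2 + A_z p)))
      (delta_z p - k_mz p * x 4%nat) _ _ HNz); [apply Rmult_pos_neg; positivity |].
    intros u; unfold N_z; ring.
Qed.

Lemma jac_4_2_pos : 0 < jac p x 4%nat 2%nat.
Proof.
  pose proof Hp as Hp'. destruct_valid_params Hp'.
  pose proof (Hx 2%nat ltac:(lia)) as Hs.
  pose proof (Hx 3%nat ltac:(lia)) as Hmu200. pose proof (Hx 4%nat ltac:(lia)) as Hz.
  assert (HN : 0 < N_z p (x 3%nat)) by (unfold N_z; apply Nfun_pos; assumption).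
  unfold jac, G, upd; cbn [Nat.eqb].
  erewrite (Derive_affine_comp _ _
    (gamma_z p * E_Z p * x 4%nat ^ 2 / (x 4%nat ^ 2 + A_z p) * N_z p (x 3%nat))
    (delta_z p - k_mz p * x 4%nat) _ _ (is_derive_hill_activator _ (x 2%nat) HAs));
    [positivity |].
  intros u; field; split; apply Rgt_not_eq; nra.
Qed.

End Jacobian.

Theorem mainTheorem2 (p : params) (Hp : valid_params p) (x : nat -> R)
  (Hx : forall k : nat, (1 <= k <= 4)%nat -> 0 < x k) :
  exists J : nat -> nat -> R,
    is_jacobian p x J /\
    J 1%nat 3%nat = 0 /\ J 2%nat 3%nat = 0 /\ J 2%nat 4%nat = 0 /\
    J 3%nat 1%nat = 0 /\ J 4%nat 1%nat = 0 /\
    J 1%nat 2%nat < 0 /\ J 1%nat 4%nat < 0 /\ J 3%nat 2%nat < 0 /\ J 3%nat 4%nat < 0 /\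
    J 2%nat 1%nat < 0 /\ J 4%nat 3%nat < 0 /\
    0 < J 4%nat 2%nat /\
    metzler4 (conj_sigma J) /\
    irreducible4 J.
Proof.
  exists (jac p x).
  destruct (jac_zero_entries p x) as (J13 & J23 & J24 & J31 & J41).
  destruct (jac_repression_entries_neg p x Hp Hx) as (J12 & J14 & J32 & J34).
  destruct (jac_N_entries_neg p x Hp Hx) as (J21 & J43).
  pose proof (jac_4_2_pos p x Hp Hx) as J42.
  split; [exact (is_jacobian_jac p x Hp Hx) |].
  do 12 (split; [assumption |]).
  split.
  - apply metzler4_conj_sigma; lra.
  - apply irreducible4_of_cycles; lra.
Qed.
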